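(* Let $\mathbb{K}$ be a non-Archimedean valued field, $G$ a compactly generated topological group, and $E$ a normed $\mathbb{K}[G]$-module. Then every 1-quasicocycle $f : G \to E$ is bounded.
   Context: A non-Archimedean valued field is a field with an absolute value satisfying the ultrametric inequality. A normed $\mathbb{K}$-vector space has a norm satisfying $\|x\|=0$ iff $x=0$, $\|x+y\|\le\max\{\|x\|,\|y\|\}$, $\|\alpha x\|=|\alpha|_\mathbb{K}\|x\|$; a normed $\mathbb{K}[G]$-module is one on which $G$ acts by linear isometries. A 1-quasicocycle is a continuous map $f:G\to E$ such that $\delta^1 f(g,h)=g\cdot f(h)-f(gh)+f(g)$ is bounded on $G\times G$. *)

From HB Require Import structures.
From mathcomp Require Import all_boot all_order all_algebra.
From mathcomp Require Import all_classical all_reals topology.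
Set Implicit Arguments. Unset Strict Implicit. Unset Printing Implicit Defensive.
Import Order.TTheory GRing.Theory Num.Theory.
Local Open Scope classical_set_scope.
Local Open Scope ring_scope.

Definition nonarch_abs (K : fieldType) (R : realType) (absK : K -> R) : Prop :=
  [/\ forall x : K, 0 <= absK x,
      forall x : K, absK x = 0 <-> x = 0,
      forall x y : K, absK (x * y) = absK x * absK y
    & forall x y : K, absK (x + y) <= Num.max (absK x) (absK y)].

Definition nonarch_norm (K : fieldType) (R : realType) (absK : K -> R)
    (E : lmodType K) (nrm : E -> R) : Prop :=
  [/\ forall x : E, 0 <= nrm x,
      forall x : E, nrm x = 0 <-> x = 0,
      forall x y : E, nrm (x + y) <= Num.max (nrm x) (nrm y)
    & forall (a : K) (x : E), nrm (a *: x) = absK a * nrm x].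

Definition topological_group (G : topologicalType)
    (mul : G -> G -> G) (inv : G -> G) (one : G) : Prop :=
  [/\ forall x y z, mul x (mul y z) = mul (mul x y) z,
      forall x, mul one x = x /\ mul x one = x,
      forall x, mul (inv x) x = one /\ mul x (inv x) = one,
      continuous (fun p : G * G => mul p.1 p.2)
    & continuous inv].

Definition is_subgroup (G : Type) (mul : G -> G -> G) (inv : G -> G) (one : G)
    (S : set G) : Prop :=
  [/\ S one, forall x y, S x -> S y -> S (mul x y) & forall x, S x -> S (inv x)].

Definition generates (G : Type) (mul : G -> G -> G) (inv : G -> G) (one : G)
    (C : set G) : Prop :=
  forall S : set G, is_subgroup mul inv one S -> C `<=` S -> S = setT.

Definition compactly_generated (G : topologicalType)
    (mul : G -> G -> G) (inv : G -> G) (one : G) : Prop :=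
  exists C : set G, compact C /\ generates mul inv one C.

Definition isometric_linear_action (G : Type) (mul : G -> G -> G) (one : G)
    (K : fieldType) (R : realType) (E : lmodType K) (nrm : E -> R)
    (act : G -> E -> E) : Prop :=
  [/\ forall g (a : K) (x y : E), act g (a *: x + y) = a *: act g x + act g y,
      forall g x, nrm (act g x) = nrm x,
      forall x, act one x = x
    & forall g h x, act (mul g h) x = act g (act h x)].

Definition norm_continuous (G : topologicalType) (K : fieldType) (R : realType)
    (E : lmodType K) (nrm : E -> R) (f : G -> E) : Prop :=
  forall (g : G) (eps : R), 0 < eps ->
    exists U : set G, nbhs g U /\ forall h, U h -> nrm (f h - f g) < eps.

Definition quasicocycle (G : topologicalType) (mul : G -> G -> G)
    (K : fieldType) (R : realType) (E : lmodType K) (nrm : E -> R)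
    (act : G -> E -> E) (f : G -> E) : Prop :=
  norm_continuous nrm f /\
  exists M : R, forall g h : G, nrm (act g (f h) - f (mul g h) + f g) <= M.

Definition bounded_map (G : Type) (K : fieldType) (R : realType)
    (E : lmodType K) (nrm : E -> R) (f : G -> E) : Prop :=
  exists M : R, forall g : G, nrm (f g) <= M.

From mathcomp Require Import all_boot all_order all_algebra.
From mathcomp Require Import all_classical all_reals topology.
Set Implicit Arguments. Unset Strict Implicit. Unset Printing Implicit Defensive.
Import Order.TTheory GRing.Theory Num.Theory.
Local Open Scope classical_set_scope.
Local Open Scope ring_scope.

(* For C at least the defect bound M, the ultrametric inequality makes the
   sublevel set {g | |f g| <= C} closed under products and inverses, because
   f(gh) = (g.f(h) + f(g)) - (defect) and g.f(g^-1) = defect + f(1) - f(g).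
   A continuous f is bounded on a compact generating set, so for C large
   this subgroup contains the generators and is all of G. *)

Section UltrametricNorm.

Variables (R : realType) (K : fieldType) (absK : K -> R).
Variables (E : lmodType K) (nrm : E -> R).
Hypotheses (HK : nonarch_abs absK) (HE : nonarch_norm absK nrm).

Lemma nonarch_abs1 : absK 1 = 1.
Proof.
have [_ abs_eq0 absM _] := HK.
have abs1_neq0 : absK 1 != 0 by apply/eqP => /abs_eq0/eqP; rewrite oner_eq0.
by apply: (mulfI abs1_neq0); rewrite -absM !mulr1.
Qed.

Lemma nonarch_absN1 : absK (-1) = 1.
Proof.
have [abs_ge0 _ absM _] := HK.
have : absK (-1) ^+ 2 == 1 by rewrite expr2 -absM mulrNN mulr1 nonarch_abs1.
rewrite sqrf_eq1 => /orP[/eqP // | /eqP absN1].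
by have := abs_ge0 (-1); rewrite absN1 ler0N1.
Qed.

Lemma nonarch_normN (x : E) : nrm (- x) = nrm x.
Proof. by have [_ _ _ nrmZ] := HE; rewrite -scaleN1r nrmZ nonarch_absN1 mul1r. Qed.

Lemma nonarch_normB (x y : E) : nrm (x - y) <= Num.max (nrm x) (nrm y).
Proof. by have [_ _ nrmD _] := HE; rewrite -(nonarch_normN y) nrmD. Qed.

Lemma norm_continuous_bounded_on_compact (T : topologicalType) (f : T -> E)
    (C : set T) :
  norm_continuous nrm f -> compact C ->
  exists B : R, forall x, C x -> nrm (f x) <= B.
Proof.
move=> f_cont /compact_near_coveringP cover.
case: (cover nat \oo (fun n x => nrm (f x) <= n%:R)) => [x Cx|].
  have [U [Ux near_fx]] := f_cont x 1 ltr01.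
  exists (U, [set n : nat | Num.max (nrm (f x)) 1 <= n%:R]).
    by split => //; apply: nbhs_infty_ger.
  case=> y n [/= Uy le_n]; apply: le_trans le_n.
  have [_ _ nrmD _] := HE.
  rewrite -(subrK (f x) (f y)); apply: le_trans (nrmD _ _) _.
  by rewrite ge_max !le_max lexx (ltW (near_fx _ Uy)) !orbT.
by move=> n _ bound_n; exists n%:R; apply: (bound_n n (leqnn n)).
Qed.

Section QuasicocycleSublevel.

Variables (G : Type) (mul : G -> G -> G) (inv : G -> G) (one : G).
Variables (act : G -> E -> E) (f : G -> E) (M : R).
Hypotheses (mul11 : mul one one = one) (mulgV : forall g, mul g (inv g) = one).
Hypotheses (act_isometry : forall g x, nrm (act g x) = nrm x)
           (act1 : forall x, act one x = x).
Hypothesis defect_bounded :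
  forall g h, nrm (act g (f h) - f (mul g h) + f g) <= M.

Lemma quasicocycle_norm_one : nrm (f one) <= M.
Proof. by have := defect_bounded one one; rewrite act1 mul11 subrK. Qed.

Lemma quasicocycle_sublevel_subgroup (C : R) :
  M <= C -> is_subgroup mul inv one [set g | nrm (f g) <= C].
Proof.
move=> le_MC; have [_ _ nrmD _] := HE.
have defect_le g h := le_trans (defect_bounded g h) le_MC.
have f1_le := le_trans quasicocycle_norm_one le_MC.
split=> //= [g h fg_le fh_le | g fg_le].
- have -> : f (mul g h) = (act g (f h) + f g) - (act g (f h) - f (mul g h) + f g).
    by rewrite opprD opprB addrACA subrr addr0 addrCA subrr addr0.
  apply: le_trans (nonarch_normB _ _) _; rewrite ge_max defect_le andbT.
  by apply: le_trans (nrmD _ _) _; rewrite ge_max act_isometry fg_le fh_le.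
- rewrite -(act_isometry g).
  have -> : act g (f (inv g)) =
      (act g (f (inv g)) - f (mul g (inv g)) + f g) + f one - f g.
    by rewrite mulgV [_ - f one + f g + f one]addrAC subrK addrK.
  apply: le_trans (nonarch_normB _ _) _; rewrite ge_max fg_le andbT.
  by apply: le_trans (nrmD _ _) _; rewrite ge_max defect_le f1_le.
Qed.

End QuasicocycleSublevel.

End UltrametricNorm.

Theorem proposition8p6
  (R : realType) (K : fieldType) (absK : K -> R)
  (G : topologicalType) (mul : G -> G -> G) (inv : G -> G) (one : G)
  (E : lmodType K) (nrm : E -> R) (act : G -> E -> E)
  (HK : nonarch_abs absK)
  (HG : topological_group mul inv one)
  (HGcg : compactly_generated mul inv one)
  (HE : nonarch_norm absK nrm)
  (Hact : isometric_linear_action mul one nrm act)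
  (f : G -> E) (Hf : quasicocycle mul nrm act f) :
  bounded_map nrm f.
Proof.
have [_ mul1g mulgV _ _] := HG.
have [_ act_isometry act1 _] := Hact.
have [gens [gens_compact gens_generate]] := HGcg.
have [f_cont [M defect_bounded]] := Hf.
have [B gens_bounded] := norm_continuous_bounded_on_compact HE f_cont gens_compact.
set C := Num.max M B.
have [le_MC le_BC] : M <= C /\ B <= C by rewrite !le_max !lexx orbT.
have sublevel_subgroup := quasicocycle_sublevel_subgroup HK HE
  (proj1 (mul1g one)) (fun g => proj2 (mulgV g)) act_isometry act1
  defect_bounded le_MC.
have gens_sub : gens `<=` [set g | nrm (f g) <= C].
  by move=> g /gens_bounded /le_trans; apply.
have sublevel_full := gens_generate _ sublevel_subgroup gens_sub.
exists C => g.
have : [set g | nrm (f g) <= C] g by rewrite sublevel_full.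
by [].
Qed.
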